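(* Let $p,q$ be odd primes with $q-p=2$, and let $D=D_1\cdots D_n$ with $D_1,\dots,D_n$ distinct primes, $2\nmid D$, $p\nmid D$, $q\nmid D$; put $\widehat{D_i}=D/D_i$. Let $E'=E'_{+}: y^2=x^3-2(p+q)Dx^2+4D^2x$ and $\widehat\varphi:E'\to E$ the dual $2$-isogeny onto $E=E_+: y^2=x(x+pD)(x+qD)$. For each $i$ put $$\Pi_i^{+}(D)'=\Big(1-\big(\tfrac{-p\widehat{D_i}}{D_i}\big)\Big)\Big(1-\big(\tfrac{-q\widehat{D_i}}{D_i}\big)\Big)+\sum_{j=1,\,j\ne i}^{n}\Big(1-\big(\tfrac{D_i}{D_j}\big)\Big)\Big(1-\big(\tfrac{pqD_i}{D_j}\big)\Big).$$ Let $Z(n)=\{1,\dots,n\}$ and $I=\{i\in Z(n): D_i\equiv 1\ (\mathrm{mod}\ 8)\}\cup\{i: (1+p\widehat{D_i})(1+q\widehat{D_i})\equiv 0\ (\mathrm{mod}\ 16)\}\cup\{i: D_i\equiv 3\ (\mathrm{mod}\ 8),\ p\equiv 1\ (\mathrm{mod}\ 4)\}\cup\{i: D_i\equiv 7\ (\mathrm{mod}\ 8),\ p\equiv 3\ (\mathrm{mod}\ 4)\}$, and $\rho^{+}(D)'=\sum_{i\in I}\Big[\frac{1}{1+\Pi_i^{+}(D)'}\Big]$. Then there exists a subset $T\subset\{D_1,\dots,D_n\}$ with $\#T=\rho^{+}(D)'$ such that $S^{(\widehat\varphi)}(E'/\mathbb{Q})\supset\langle T\bmod\mathbb{Q}^{\star2}\rangle\cong(\mathbb{Z}/2\mathbb{Z})^{\rho^{+}(D)'}$.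 In particular $\dim_2 S^{(\widehat\varphi)}(E'/\mathbb{Q})\ge\rho^{+}(D)'$.
   Context: $(\frac{\cdot}{\cdot})$ is the Legendre symbol and $[x]$ the greatest integer $\le x$. The dual isogeny is $\widehat\varphi(x,y)=(y^2/(4x^2),\ y(4D^2-x^2)/(8x^2))$. The $\widehat\varphi$-Selmer group is viewed as a subgroup of $\mathbb{Q}^\star/\mathbb{Q}^{\star2}$: with $S=\{\infty,2,p,q,D_1,\dots,D_n\}$ and $\mathbb{Q}(S,2)=\langle -1,2,p,q,D_1,\dots,D_n\rangle$, it equals the set of $d\in\mathbb{Q}(S,2)$ (squarefree integer representatives) such that $C'_d: dw^2=d^2+(p+q)Dd z^2+pqD^2z^4$ has a $\mathbb{Q}_v$-point for every $v\in S$. *)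

From Stdlib Require Import ZArith List Reals Znumtheory.
Import ListNotations.
Open Scope Z_scope.

Definition is_sq_mod (a l : Z) : bool :=
  existsb (fun x => Z.eqb ((x * x - a) mod l) 0)
          (map Z.of_nat (seq 0 (Z.to_nat l))).

Definition legendre (a l : Z) : Z :=
  if Z.eqb (a mod l) 0 then 0 else if is_sq_mod a l then 1 else -1.

Definition zsum (l : list Z) : Z := fold_right Z.add 0 l.
Definition zprod (l : list Z) : Z := fold_right Z.mul 1 l.

(** D_i for index i in {0,...,n-1} (paper's D_{i+1}); D = D_1 ... D_n;
    hat D_i = D / D_i. *)
Definition Di (Ds : list Z) (i : nat) : Z := nth i Ds 1.
Definition Dprod (Ds : list Z) : Z := zprod Ds.
Definition Dhat (Ds : list Z) (i : nat) : Z := Dprod Ds / Di Ds i.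

Definition Pi_plus (p q : Z) (Ds : list Z) (i : nat) : Z :=
  (1 - legendre (- p * Dhat Ds i) (Di Ds i)) *
  (1 - legendre (- q * Dhat Ds i) (Di Ds i)) +
  zsum (map (fun j => (1 - legendre (Di Ds i) (Di Ds j)) *
                      (1 - legendre (p * q * Di Ds i) (Di Ds j)))
            (filter (fun j => negb (Nat.eqb j i)) (seq 0 (length Ds)))).

Definition in_I (p q : Z) (Ds : list Z) (i : nat) : bool :=
  Z.eqb (Di Ds i mod 8) 1
  || Z.eqb (((1 + p * Dhat Ds i) * (1 + q * Dhat Ds i)) mod 16) 0
  || (Z.eqb (Di Ds i mod 8) 3 && Z.eqb (p mod 4) 1)
  || (Z.eqb (Di Ds i mod 8) 7 && Z.eqb (p mod 4) 3).

(** rho^+(D)' = sum_{i in I} [ 1 / (1 + Pi_i) ]  (floor; 1 + Pi_i >= 1). *)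
Definition rho_plus (p q : Z) (Ds : list Z) : Z :=
  zsum (map (fun i => 1 / (1 + Pi_plus p q Ds i))
            (filter (in_I p q Ds) (seq 0 (length Ds)))).

Definition Cd_real_point (p q D d : Z) : Prop :=
  exists z w : R,
    (IZR d * w ^ 2 = IZR (d * d) + IZR ((p + q) * D * d) * z ^ 2
                     + IZR (p * q * D * D) * z ^ 4)%R.

(** l-adic integers as the inverse limit lim Z/l^k Z: a sequence x with
    x (k+1) = x k mod l^k. *)
Definition Zl_elt (l : Z) (x : nat -> Z) : Prop :=
  forall k : nat, (x (S k) - x k) mod (l ^ Z.of_nat k) = 0.

(** Q_l-point on C'_d: z = Z / l^m, w = W / l^n with Z, W in Z_l (every
    element of Q_l = Z_l[1/l] has this form).  The equation
    d w^2 = d^2 + a z^2 + b z^4 multiplied by l^(4m+2n) reads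
    d W^2 l^(4m) = d^2 l^(4m+2n) + a Z^2 l^(2m+2n) + b Z^4 l^(2n),
    an identity in Z_l, i.e. componentwise modulo l^k for all k. *)
Definition Cd_Ql_point (p q D d l : Z) : Prop :=
  let a := (p + q) * D * d in
  let b := p * q * D * D in
  exists (m n : nat) (Zs Ws : nat -> Z),
    Zl_elt l Zs /\ Zl_elt l Ws /\
    forall k : nat,
      (d * Ws k ^ 2 * l ^ (4 * Z.of_nat m)
       - (d * d * l ^ (4 * Z.of_nat m + 2 * Z.of_nat n)
          + a * Zs k ^ 2 * l ^ (2 * Z.of_nat m + 2 * Z.of_nat n)
          + b * Zs k ^ 4 * l ^ (2 * Z.of_nat n))) mod (l ^ Z.of_nat k) = 0.

Definition squarefree (d : Z) : Prop :=
  d <> 0 /\ forall k : Z, (k * k | d) -> Z.abs k = 1.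

Definition S_primes (p q : Z) (Ds : list Z) : list Z := 2 :: p :: q :: Ds.

Definition in_QS2 (p q : Z) (Ds : list Z) (d : Z) : Prop :=
  squarefree d /\ forall l : Z, prime l -> (l | d) -> In l (S_primes p q Ds).

(** The hat-phi-Selmer group S^(hat phi)(E'/Q), as a set of squarefree
    integer representatives of Q^*/Q^*2. *)
Definition selmer_hatphi (p q : Z) (Ds : list Z) (d : Z) : Prop :=
  in_QS2 p q Ds d /\
  Cd_real_point p q (Dprod Ds) d /\
  forall l, In l (S_primes p q Ds) -> Cd_Ql_point p q (Dprod Ds) d l.

Definition prodD (Ds : list Z) (U : list nat) : Z := zprod (map (Di Ds) U).

(** Write [D = d e] with [d] a product of some of the [D_i] in [T].  Since
    [d^2 + (p+q) D d z^2 + p q D^2 z^4 = d^2 (1 + p e z^2) (1 + q e z^2)], the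
    curve [C'_d] has a [Q_l]-point as soon as [d (1 + p e z^2) (1 + q e z^2)] is
    an [l]-adic square for some [z], and by Hensel's lemma it suffices to find
    [z] making it a unit square modulo [l] (modulo [8] for [l = 2]), possibly
    after removing an even power of [l].  At [l = p, q] this is immediate.  At
    [l = D_j] with [j] not in the subset, the vanishing of the [j]-th summand
    of each [Pi_i^+(D)'] makes [d] or [p q d] a square modulo [D_j]; at
    [l = D_j] dividing [d], the vanishing of the first summand of
    [Pi_j^+(D)'] gives a root of [1 + p e z^2] or [1 + q e z^2] modulo [D_j],
    which can be adjusted so that the remaining factor is a square.  At [2] the
    conditions defining [I] imply, by a finite check modulo [16], one of five
    sufficient congruence conditions modulo [8] whose disjunction is closed
    under multiplication of [d].  Finally [T] consists of the [i] in [I] with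
    [Pi_i^+(D)' = 0], the indices where [[1/(1 + Pi_i^+(D)')]] equals [1], and
    distinct subproducts of distinct primes differ modulo squares. *)

From Stdlib Require Import ZArith List Reals Znumtheory Zpow_facts Lia
  ClassicalEpsilon Classical Bool Permutation.
Import ListNotations.
Open Scope Z_scope.

Definition cong (n a b : Z) : Prop := (n | a - b).

Lemma cong_refl n a : cong n a a.
Proof. unfold cong. rewrite Z.sub_diag. apply Z.divide_0_r. Qed.

Lemma cong_sym n a b : cong n a b -> cong n b a.
Proof. intros [k Hk]. exists (- k). lia. Qed.

Lemma cong_trans n a b c : cong n a b -> cong n b c -> cong n a c.
Proof. intros [k Hk] [j Hj]. exists (k + j). lia. Qed.

Lemma cong_add n a b c d : cong n a b -> cong n c d -> cong n (a + c) (b + d).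
Proof. intros [k Hk] [j Hj]. exists (k + j). lia. Qed.

Lemma cong_sub n a b c d : cong n a b -> cong n c d -> cong n (a - c) (b - d).
Proof. intros [k Hk] [j Hj]. exists (k - j). lia. Qed.

Lemma cong_opp n a b : cong n a b -> cong n (- a) (- b).
Proof. intros [k Hk]. exists (- k). lia. Qed.

Lemma cong_mul n a b c d : cong n a b -> cong n c d -> cong n (a * c) (b * d).
Proof.
  intros [k Hk] [j Hj]. exists (k * c + b * j).
  replace (a * c - b * d) with ((a - b) * c + b * (c - d)) by ring.
  rewrite Hk, Hj. ring.
Qed.

Lemma cong_divide n m a b : (n | m) -> cong m a b -> cong n a b.
Proof. apply Z.divide_trans. Qed.

Lemma cong_mod_eq n a b : n <> 0 -> cong n a b -> a mod n = b mod n.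
Proof. intros Hn [k Hk]. replace a with (b + k * n) by lia. apply Z.mod_add, Hn. Qed.

Lemma mod_eq_cong n a b : n <> 0 -> a mod n = b mod n -> cong n a b.
Proof.
  intros Hn H. exists (a / n - b / n).
  rewrite (Z.div_mod a n Hn) at 1. rewrite (Z.div_mod b n Hn) at 1. rewrite H. ring.
Qed.

Lemma cong_mod n a : n <> 0 -> cong n (a mod n) a.
Proof. intros Hn. apply mod_eq_cong, Z.mod_mod; exact Hn. Qed.

Lemma not_divide_cong l a b : cong l a b -> ~ (l | b) -> ~ (l | a).
Proof.
  intros H Hb Ha. apply Hb. replace b with (a - (a - b)) by ring.
  apply Z.divide_sub_r; assumption.
Qed.

Ltac congr := repeat first
  [ apply cong_refl | assumption
  | apply cong_add | apply cong_sub | apply cong_mul | apply cong_opp ].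

Lemma pow_of_nat_succ l k : l ^ Z.of_nat (S k) = l * l ^ Z.of_nat k.
Proof. rewrite Nat2Z.inj_succ, Z.pow_succ_r; lia. Qed.

Lemma pow_of_nat_pos l k : 0 < l -> 0 < l ^ Z.of_nat k.
Proof. intros; apply Z.pow_pos_nonneg; lia. Qed.

Lemma pow_even_of_nat l m : l ^ (2 * Z.of_nat m) = (l ^ Z.of_nat m) ^ 2.
Proof. rewrite Z.mul_comm, Z.pow_mul_r; lia. Qed.

Lemma prime_not_divide_mul l a b : prime l -> ~ (l | a) -> ~ (l | b) -> ~ (l | a * b).
Proof. intros Hl Ha Hb H. apply prime_mult in H; tauto. Qed.

Lemma odd_prime_not_divide_2 l : prime l -> l <> 2 -> ~ (l | 2).
Proof. intros Hl H2 Hd. apply H2, prime_div_prime; auto using prime_2. Qed.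

Lemma inverse_mod_pow l a k : prime l -> ~ (l | a) ->
  exists y, cong (l ^ Z.of_nat k) (a * y) 1.
Proof.
  intros Hl Ha.
  assert (H : rel_prime a (l ^ Z.of_nat k)).
  { apply rel_prime_Zpower_r; [lia|]. apply rel_prime_sym, prime_rel_prime; auto. }
  apply rel_prime_bezout in H as [u v Huv]. exists u, (- v). lia.
Qed.

Lemma odd_square_mod_8 w : Z.odd w = true -> (8 | w * w - 1).
Proof.
  intros H. apply Z.odd_spec in H as [u ->].
  destruct (Z.Even_or_Odd u) as [[v ->]|[v ->]].
  - exists (2 * v * v + v). ring.
  - exists (2 * v * v + 3 * v + 1). ring.
Qed.

(** * Squares in [Z_l] *)

Lemma Zl_elt_of_lifts (l : Z) (P : nat -> Z -> Prop) (x0 : Z) :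
  0 < l -> P 0%nat x0 ->
  (forall k x, P k x -> exists y, (l ^ Z.of_nat k | y - x) /\ P (S k) y) ->
  exists W : nat -> Z, Zl_elt l W /\ forall k, P k (W k).
Proof.
  intros Hl H0 Hs.
  assert (lift : forall k x, P k x -> {y | (l ^ Z.of_nat k | y - x) /\ P (S k) y}).
  { intros k x H. apply constructive_indefinite_description. auto. }
  set (F := fix F (k : nat) : {x | P k x} :=
         match k with
         | O => exist _ x0 H0
         | S k' => let (x, Hx) := F k' in
                   let (y, Hy) := lift k' x Hx in exist _ y (proj2 Hy)
         end).
  exists (fun k => proj1_sig (F k)). split.
  - intros k. simpl. destruct (F k) as [x Hx]. simpl.
    destruct (lift k x Hx) as [y [Hy1 Hy2]]. simpl.
    apply Z.mod_divide; [pose proof (pow_of_nat_pos l k Hl); lia | exact Hy1].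
  - intros k. destruct (F k). assumption.
Qed.

Definition Zl_square (l N : Z) : Prop :=
  exists W : nat -> Z, Zl_elt l W /\ forall k, (l ^ Z.of_nat k | W k * W k - N).

Definition sq_mod (l a : Z) : Prop := exists x, cong l (x * x) a.

Lemma Zl_square_of_sq_mod l N : prime l -> l <> 2 -> ~ (l | N) -> sq_mod l N -> Zl_square l N.
Proof.
  intros Hl H2 HN [x0 Hx0].
  assert (Hl0 : 0 < l) by (pose proof (prime_ge_2 l Hl); lia).
  destruct (Zl_elt_of_lifts l (fun k x => (l ^ Z.of_nat k | x * x - N)) x0 Hl0)
    as [W HW]; [apply Z.divide_1_l| |exists W; exact HW].
  intros [|k] x Hx.
  { exists x0. split; [apply Z.divide_1_l|]. rewrite Z.pow_1_r. exact Hx0. }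
  assert (Hxl : ~ (l | x)).
  { intros Hd. apply HN. rewrite pow_of_nat_succ in Hx.
    replace N with (x * x - (x * x - N)) by ring. apply Z.divide_sub_r.
    - apply Z.divide_mul_l, Hd.
    - eapply Z.divide_trans; [|exact Hx]. apply Z.divide_factor_l. }
  destruct (inverse_mod_pow l (2 * x) 1 Hl) as [i [j Hj]].
  { apply prime_not_divide_mul; auto using odd_prime_not_divide_2. }
  rewrite Z.pow_1_r in Hj. destruct Hx as [c Hc].
  set (L := l ^ Z.of_nat (S k)) in *.
  (* Newton step: [x - c L / (2 x)] with [1 / (2 x)] replaced by [i]. *)
  exists (x - c * i * L). split; [exists (- c * i); ring|].
  rewrite (pow_of_nat_succ l (S k)). fold L.
  assert (HL : L = l * l ^ Z.of_nat k) by apply pow_of_nat_succ.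
  exists (- c * j + c * c * i * i * l ^ Z.of_nat k).
  replace N with (x * x - c * L) by lia.
  replace ((x - c * i * L) * (x - c * i * L) - (x * x - c * L)) with
    (- c * (2 * x * i - 1) * L + c * c * i * i * L * L) by ring.
  rewrite Hj, HL at 1. rewrite HL. ring.
Qed.

Lemma Zl_square_2 N : (8 | N - 1) -> Zl_square 2 N.
Proof.
  intros HN.
  destruct (Zl_elt_of_lifts 2 (fun k x => (2 ^ (Z.of_nat k + 3) | x * x - N)) 1)
    as [W [HW1 HW2]]; [lia| |intros k x Hx|].
  - destruct HN as [c Hc]. exists (- c). change (2 ^ (Z.of_nat 0 + 3)) with 8. lia.
  - destruct Hx as [c Hc]. set (P := 2 ^ Z.of_nat k) in *.
    assert (HP : 2 ^ (Z.of_nat k + 3) = 8 * P) by (unfold P; rewrite Z.pow_add_r; lia).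
    assert (HP2 : 2 ^ (Z.of_nat (S k) + 3) = 16 * P)
      by (unfold P; rewrite Nat2Z.inj_succ, <- Z.add_1_r, !Z.pow_add_r; lia).
    rewrite HP in Hc. rewrite HP2. destruct HN as [c' Hc'].
    destruct (Z.Even_or_Odd x) as [[u Hu]|[u Hu]]; [exfalso; subst x; nia|].
    exists (x - c * 4 * P). split; [exists (- 4 * c); ring|].
    exists (- c * u + c * c * P). replace N with (x * x - c * (8 * P)) by lia.
    subst x. ring.
  - exists W. split; [exact HW1|]. intros k. eapply Z.divide_trans; [|apply HW2].
    exists 8. rewrite Z.pow_add_r; lia.
Qed.

(** * Quadratic residues modulo an odd prime *)

Definition zrange (a : Z) (n : nat) : list Z := map (fun k => a + Z.of_nat k) (seq 0 n).

Lemma in_zrange a n x : In x (zrange a n) <-> a <= x < a + Z.of_nat n.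
Proof.
  unfold zrange. rewrite in_map_iff. split.
  - intros [k [<- Hk]]. apply in_seq in Hk. lia.
  - intros H. exists (Z.to_nat (x - a)). rewrite in_seq. lia.
Qed.

Lemma length_zrange a n : length (zrange a n) = n.
Proof. unfold zrange. rewrite length_map, length_seq. reflexivity. Qed.

Lemma NoDup_zrange a n : NoDup (zrange a n).
Proof.
  apply NoDup_map_NoDup_ForallPairs; [|apply seq_NoDup]. intros x y _ _ H. lia.
Qed.

Lemma NoDup_map_inj {A B} (f : A -> B) (s : list A) :
  NoDup s -> (forall x y, In x s -> In y s -> f x = f y -> x = y) -> NoDup (map f s).
Proof. intros H1 H2. apply NoDup_map_NoDup_ForallPairs; auto. Qed.

Lemma divide_abs_lt l z : (l | z) -> Z.abs z < Z.abs l -> z = 0.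
Proof.
  intros H Hz. destruct (Z.eq_dec z 0) as [|Hz0]; [assumption|].
  pose proof (Zdivide_bounds l z H Hz0). lia.
Qed.

Section QuadraticResidues.
Variable l : Z.
Hypothesis Hl : prime l.
Hypothesis Hl2 : l <> 2.

Lemma odd_prime_pos : 0 < l.
Proof. pose proof (prime_ge_2 l Hl). lia. Qed.

Lemma odd_prime_half : exists h, l = 2 * h + 1 /\ 1 <= h.
Proof.
  pose proof (prime_ge_2 l Hl). destruct (Z.Even_or_Odd l) as [[h Hh]|[h Hh]].
  - exfalso. apply Hl2. symmetry. apply prime_div_prime; [apply prime_2|exact Hl|].
    exists h. lia.
  - exists h. lia.
Qed.

Lemma cong_mod_prime a : cong l (a mod l) a.
Proof. apply cong_mod. pose proof odd_prime_pos. lia. Qed.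

Lemma sq_mod_cong a b : sq_mod l a -> cong l a b -> sq_mod l b.
Proof. intros [x Hx] H. exists x. eapply cong_trans; eauto. Qed.

Lemma sq_mod_square x : sq_mod l (x * x).
Proof. exists x. apply cong_refl. Qed.

Lemma sq_mod_mul a b : sq_mod l a -> sq_mod l b -> sq_mod l (a * b).
Proof.
  intros [x Hx] [y Hy]. exists (x * y).
  replace (x * y * (x * y)) with (x * x * (y * y)) by ring. apply cong_mul; assumption.
Qed.

Lemma sq_mod_cancel a b : ~ (l | a) -> sq_mod l a -> sq_mod l (a * b) -> sq_mod l b.
Proof.
  intros Ha [s Hs] [t Ht].
  assert (Hsu : ~ (l | s)).
  { intros Hd. apply Ha. replace a with (s * s - (s * s - a)) by ring.
    apply Z.divide_sub_r; [apply Z.divide_mul_l, Hd|exact Hs]. }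
  destruct (inverse_mod_pow l s 1 Hl Hsu) as [s' Hs']. rewrite Z.pow_1_r in Hs'.
  exists (t * s').
  apply cong_trans with (a * b * (s' * s')).
  { replace (t * s' * (t * s')) with (t * t * (s' * s')) by ring. congr. }
  apply cong_trans with (s * s' * (s * s') * b).
  { replace (s * s' * (s * s') * b) with (s * s * b * (s' * s')) by ring.
    apply cong_sym. congr. }
  replace b with (1 * 1 * b) at 2 by ring. congr.
Qed.

Lemma half_square_inj h c x y : l = 2 * h + 1 -> ~ (l | c) ->
  0 <= x <= h -> 0 <= y <= h -> (l | c * (x * x) - c * (y * y)) -> x = y.
Proof.
  intros Hh Hc Hx Hy H.
  replace (c * (x * x) - c * (y * y)) with (c * ((x - y) * (x + y))) in H by ring.
  apply (prime_mult l Hl) in H as [H|H]; [contradiction|auto].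
  apply (prime_mult l Hl) in H as [H|H]; auto; apply divide_abs_lt in H; lia.
Qed.

Lemma half_square_unit h x : l = 2 * h + 1 -> 1 <= x <= h -> ~ (l | x * x).
Proof.
  intros Hh Hx H. apply (prime_mult l Hl) in H as [H|H]; auto; apply divide_abs_lt in H; lia.
Qed.

Lemma unit_mod_in_range v : ~ (l | v) -> In (v mod l) (zrange 1 (Z.to_nat (l - 1))).
Proof.
  intros Hv. pose proof odd_prime_pos. apply in_zrange.
  pose proof (Z.mod_pos_bound v l ltac:(lia)).
  assert (v mod l <> 0) by (intros E; apply Hv, Z.mod_divide; lia). lia.
Qed.

Lemma sq_mod_half_rep h v : l = 2 * h + 1 -> sq_mod l v -> ~ (l | v) ->
  exists r, 1 <= r <= h /\ (r * r) mod l = v mod l.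
Proof.
  intros Hh [t Ht] Hv. pose proof odd_prime_pos.
  set (t' := t mod l).
  assert (Ht' : 0 <= t' < l) by (apply Z.mod_pos_bound; lia).
  assert (Hc : cong l (t' * t') v) by (eapply cong_trans; [|exact Ht]; congr; apply cong_mod_prime).
  assert (t' <> 0).
  { intros E. apply Hv. rewrite E in Hc. destruct Hc as [k Hk]. exists (- k). lia. }
  destruct (Z_le_gt_dec t' h).
  - exists t'. split; [lia|]. apply cong_mod_eq; [lia|exact Hc].
  - exists (l - t'). split; [lia|]. apply cong_mod_eq; [lia|].
    eapply cong_trans; [|exact Hc]. exists (l - 2 * t'). ring.
Qed.

(* The [h] squares and the [h] products [a x^2] ([1 <= x <= h]) are [2 h = l - 1]
   distinct unit classes, hence all of them. *)
Lemma unit_sq_or_nonsq_times_sq a b : ~ (l | a) -> ~ sq_mod l a -> ~ (l | b) ->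
  exists x, cong l (x * x) b \/ cong l (a * (x * x)) b.
Proof.
  intros Ha Hsa Hb. destruct odd_prime_half as [h [Hh Hh1]]. pose proof odd_prime_pos.
  set (L1 := map (fun x => (x * x) mod l) (zrange 1 (Z.to_nat h))).
  set (L2 := map (fun x => (a * (x * x)) mod l) (zrange 1 (Z.to_nat h))).
  assert (Hnd : NoDup (L1 ++ L2)).
  { apply NoDup_app.
    - apply NoDup_map_inj; [apply NoDup_zrange|]. intros x y Hx Hy E.
      apply in_zrange in Hx, Hy. apply (half_square_inj h 1); try lia.
      + intros H1. apply Z.divide_pos_le in H1; lia.
      + rewrite !Z.mul_1_l. apply mod_eq_cong; [lia|exact E].
    - apply NoDup_map_inj; [apply NoDup_zrange|]. intros x y Hx Hy E.
      apply in_zrange in Hx, Hy. apply (half_square_inj h a); try lia; auto.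
      apply mod_eq_cong; [lia|exact E].
    - intros v Hv1 Hv2. apply in_map_iff in Hv1 as [x [Ex Hx]], Hv2 as [y [Ey Hy]].
      apply in_zrange in Hx, Hy. rewrite <- Ey in Ex. apply mod_eq_cong in Ex; [|lia].
      apply Hsa, (sq_mod_cancel (y * y)); [apply (half_square_unit h); auto; lia
                                          |apply sq_mod_square|].
      rewrite Z.mul_comm. exists x. exact Ex. }
  assert (Hincl : incl (zrange 1 (Z.to_nat (l - 1))) (L1 ++ L2)).
  { apply NoDup_length_incl; [exact Hnd| |].
    - rewrite length_app. unfold L1, L2. rewrite !length_map, !length_zrange. lia.
    - intros v Hv. apply in_app_or in Hv as [Hv|Hv]; apply in_map_iff in Hv as [x [<- Hx]];
        apply in_zrange in Hx; apply unit_mod_in_range.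
      + apply (half_square_unit h); auto; lia.
      + apply prime_not_divide_mul; auto. apply (half_square_unit h); auto; lia. }
  pose proof (Hincl _ (unit_mod_in_range b Hb)) as Hbm.
  apply in_app_or in Hbm as [Hbm|Hbm];
    apply in_map_iff in Hbm as [x [Ex _]]; exists x; [left|right];
    (eapply cong_trans; [apply cong_sym, cong_mod_prime|]);
    rewrite Ex; apply cong_mod_prime.
Qed.

Lemma sq_mod_mul_nonsq a b : ~ (l | a) -> ~ (l | b) -> ~ sq_mod l a -> ~ sq_mod l b ->
  sq_mod l (a * b).
Proof.
  intros Ha Hb Hsa Hsb.
  destruct (unit_sq_or_nonsq_times_sq a b Ha Hsa Hb) as [x [Hx|Hx]].
  - exfalso. apply Hsb. exists x. exact Hx.
  - exists (a * x). replace (a * x * (a * x)) with (a * (a * (x * x))) by ring. congr.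
Qed.

(* If all [h + 1] distinct values of [1 + c x^2] ([0 <= x <= h]) were nonzero
   squares they would not fit into the [h] classes of nonzero squares. *)
Lemma sq_mod_shifted_value c d : ~ (l | c) -> ~ (l | d) -> ~ sq_mod l (- c) ->
  exists x, sq_mod l (d * (1 + c * (x * x))) /\ ~ (l | d * (1 + c * (x * x))).
Proof.
  intros Hc Hd Hnc. pose proof odd_prime_pos.
  assert (Hnz : forall x, ~ (l | 1 + c * (x * x))).
  { intros x Hx. apply Hnc, (sq_mod_cancel (x * x)).
    - intros Hxx. pose proof (prime_ge_2 l Hl).
      assert (l <= 1); [|lia]. apply Z.divide_pos_le; [lia|].
      replace 1 with (1 + c * (x * x) - c * (x * x)) by ring.
      apply Z.divide_sub_r; [exact Hx|apply Z.divide_mul_r, Hxx].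
    - apply sq_mod_square.
    - exists 1. destruct Hx as [k Hk]. exists k. lia. }
  destruct (classic (sq_mod l d)) as [Hsd|Hsd].
  { exists 0. rewrite Z.mul_0_r, Z.add_0_r, Z.mul_1_r. auto. }
  destruct (classic (exists x, ~ sq_mod l (1 + c * (x * x)))) as [[x Hx]|Hall].
  { exists x. split; [apply sq_mod_mul_nonsq|apply prime_not_divide_mul]; auto. }
  exfalso. destruct odd_prime_half as [h [Hh Hh1]].
  set (M := map (fun x => (1 + c * (x * x)) mod l) (zrange 0 (Z.to_nat (h + 1)))).
  set (S := map (fun x => (x * x) mod l) (zrange 1 (Z.to_nat h))).
  assert (HM : NoDup M).
  { apply NoDup_map_inj; [apply NoDup_zrange|]. intros x y Hx Hy E.
    apply in_zrange in Hx, Hy. apply (half_square_inj h c); try lia; auto.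
    apply mod_eq_cong in E as [k Hk]; [|lia]. exists k. lia. }
  assert (Hinc : incl M S).
  { intros v Hv. apply in_map_iff in Hv as [x [<- _]].
    assert (Hs : sq_mod l (1 + c * (x * x))) by (apply NNPP; intros Hn; eauto).
    destruct (sq_mod_half_rep h _ Hh Hs (Hnz x)) as [r [Hr Er]].
    apply in_map_iff. exists r. rewrite in_zrange. split; [exact Er|lia]. }
  apply NoDup_incl_length in Hinc; [|exact HM].
  unfold M, S in Hinc. rewrite !length_map, !length_zrange in Hinc. lia.
Qed.

Lemma is_sq_mod_correct a : is_sq_mod a l = true <-> sq_mod l a.
Proof.
  pose proof odd_prime_pos. unfold is_sq_mod. rewrite existsb_exists. split.
  - intros [x [_ Hx]]. exists x. apply Z.eqb_eq, Z.mod_divide in Hx; [exact Hx|lia].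
  - intros [x Hx]. pose proof (Z.mod_pos_bound x l ltac:(lia)).
    exists (x mod l). split.
    + apply in_map_iff. exists (Z.to_nat (x mod l)). rewrite in_seq. lia.
    + apply Z.eqb_eq, Z.mod_divide; [lia|].
      apply cong_trans with (x * x); [congr; apply cong_mod_prime|exact Hx].
Qed.

Lemma legendre_divide a : (l | a) -> legendre a l = 0.
Proof.
  intros H. pose proof odd_prime_pos. unfold legendre.
  apply Z.mod_divide in H; [|lia]. rewrite H. reflexivity.
Qed.

Lemma legendre_sq a : ~ (l | a) -> sq_mod l a -> legendre a l = 1.
Proof.
  intros H1 H2. pose proof odd_prime_pos. unfold legendre.
  destruct (Z.eqb_spec (a mod l) 0) as [E|_].
  - exfalso. apply H1, Z.mod_divide; [lia|exact E].
  - apply is_sq_mod_correct in H2. rewrite H2. reflexivity.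
Qed.

Lemma legendre_nonsq a : ~ (l | a) -> ~ sq_mod l a -> legendre a l = -1.
Proof.
  intros H1 H2. pose proof odd_prime_pos. unfold legendre.
  destruct (Z.eqb_spec (a mod l) 0) as [E|_].
  - exfalso. apply H1, Z.mod_divide; [lia|exact E].
  - destruct (is_sq_mod a l) eqn:E; [|reflexivity]. apply is_sq_mod_correct in E. tauto.
Qed.

Lemma legendre_eq_1 a : legendre a l = 1 -> sq_mod l a /\ ~ (l | a).
Proof.
  intros H. destruct (classic (l | a)) as [Ha|Ha].
  - rewrite legendre_divide in H; [discriminate|exact Ha].
  - destruct (classic (sq_mod l a)); [auto|]. rewrite legendre_nonsq in H; auto. discriminate.
Qed.

Lemma legendre_unit a : ~ (l | a) -> legendre a l = 1 \/ legendre a l = -1.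
Proof.
  intros H. destruct (classic (sq_mod l a)).
  - left. apply legendre_sq; assumption.
  - right. apply legendre_nonsq; assumption.
Qed.

Lemma legendre_mul a b : legendre (a * b) l = legendre a l * legendre b l.
Proof.
  destruct (classic (l | a)) as [Ha|Ha].
  { rewrite (legendre_divide a), (legendre_divide (a * b)); auto using Z.divide_mul_l. }
  destruct (classic (l | b)) as [Hb|Hb].
  { rewrite (legendre_divide b), (legendre_divide (a * b)); auto using Z.divide_mul_r. ring. }
  assert (Hab := prime_not_divide_mul l a b Hl Ha Hb).
  destruct (classic (sq_mod l a)) as [Sa|Sa]; destruct (classic (sq_mod l b)) as [Sb|Sb].
  - rewrite !legendre_sq; auto using sq_mod_mul.
  - rewrite (legendre_sq a), !legendre_nonsq; auto. intros S. apply Sb, (sq_mod_cancel a); auto.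
  - rewrite (legendre_sq b), !legendre_nonsq; auto.
    intros S. apply Sa, (sq_mod_cancel b); auto. rewrite Z.mul_comm; exact S.
  - rewrite (legendre_sq (a * b)), !legendre_nonsq; auto using sq_mod_mul_nonsq.
Qed.

End QuadraticResidues.

Lemma legendre_bounds a l : -1 <= legendre a l <= 1.
Proof. unfold legendre. destruct (a mod l =? 0); [lia|]. destruct (is_sq_mod a l); lia. Qed.

(** * Local solubility of [C'_d] *)

(* With [z = Z / l^m], this says that [d (1 + x z^2) (1 + y z^2)] is a square
   of [Q_l]. *)
Definition quartic_sq_Ql (l d x y : Z) : Prop :=
  exists (m j : nat) (z N : Z),
    d * (l ^ (2 * Z.of_nat m) + x * z * z) * (l ^ (2 * Z.of_nat m) + y * z * z)
    = l ^ (2 * Z.of_nat j) * N /\ Zl_square l N.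

Lemma quartic_sq_Ql_sym l d x y : quartic_sq_Ql l d x y -> quartic_sq_Ql l d y x.
Proof.
  intros (m & j & z & N & H1 & H2). exists m, j, z, N. split; [|exact H2].
  rewrite <- H1. ring.
Qed.

Lemma quartic_sq_Ql_of_Zl_square l d x y : Zl_square l d -> quartic_sq_Ql l d x y.
Proof.
  intros H. exists 0%nat, 0%nat, 0, d. split; [|exact H].
  change (2 * Z.of_nat 0) with 0. ring.
Qed.

(* [D = d e] turns [d w^2 = d^2 + (p+q) D d z^2 + p q D^2 z^4] into
   [(w / d)^2 = d (1 + p e z^2) (1 + q e z^2)]. *)
Lemma Cd_Ql_point_of_quartic_sq p q D d e l : 0 < l -> D = d * e ->
  quartic_sq_Ql l d (p * e) (q * e) -> Cd_Ql_point p q D d l.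
Proof.
  intros Hl HD (m & j & z & N & H1 & W & HW1 & HW2).
  exists m, (2 * m)%nat, (fun _ => z), (fun k => l ^ Z.of_nat j * W k).
  split; [|split].
  - intros k. rewrite Z.sub_diag. apply Z.mod_0_l. pose proof (pow_of_nat_pos l k Hl). lia.
  - intros k. pose proof (pow_of_nat_pos l k Hl).
    apply Z.mod_divide; [lia|]. rewrite <- Z.mul_sub_distr_l. apply Z.divide_mul_r.
    apply Z.mod_divide; [lia|apply HW1].
  - intros k. pose proof (pow_of_nat_pos l k Hl). apply Z.mod_divide; [lia|].
    rewrite !pow_even_of_nat in H1.
    set (A := l ^ Z.of_nat m) in *. set (J := l ^ Z.of_nat j) in *.
    assert (E4 : l ^ (4 * Z.of_nat m) = A ^ 4) by (unfold A; rewrite <- Z.pow_mul_r; f_equal; lia).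
    assert (E8 : l ^ (4 * Z.of_nat m + 2 * Z.of_nat (2 * m)) = A ^ 8)
      by (unfold A; rewrite <- Z.pow_mul_r; f_equal; lia).
    assert (E6 : l ^ (2 * Z.of_nat m + 2 * Z.of_nat (2 * m)) = A ^ 6)
      by (unfold A; rewrite <- Z.pow_mul_r; f_equal; lia).
    assert (E4' : l ^ (2 * Z.of_nat (2 * m)) = A ^ 4)
      by (unfold A; rewrite <- Z.pow_mul_r; f_equal; lia).
    rewrite E4, E8, E6, E4'.
    replace (d * (J * W k) ^ 2 * A ^ 4 -
      (d * d * A ^ 8 + (p + q) * D * d * z ^ 2 * A ^ 6 + p * q * D * D * z ^ 4 * A ^ 4))
      with (d * A ^ 4 * (J ^ 2 * (W k * W k - N)) +
            d * A ^ 4 * (J ^ 2 * N - d * (A ^ 2 + p * e * z * z) * (A ^ 2 + q * e * z * z)))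
      by (subst D; ring).
    rewrite H1, Z.sub_diag, Z.mul_0_r, Z.add_0_r.
    apply Z.divide_mul_r, Z.divide_mul_r, HW2.
Qed.

Lemma root_mod_pow_of_Zl_square l x k : Zl_square l (- x) ->
  (exists y, cong (l ^ Z.of_nat k) (x * y) 1) ->
  exists Z0, cong (l ^ Z.of_nat k) (x * Z0 * Z0) (-1).
Proof.
  intros [W [_ HW]] [y Hy]. exists (W k * y).
  apply cong_trans with (x * (- x) * (y * y)).
  { replace (x * (W k * y) * (W k * y)) with (x * (W k * W k) * (y * y)) by ring.
    congr. apply HW. }
  replace (x * - x * (y * y)) with (- (x * y * (x * y))) by ring.
  replace (-1) with (- (1 * 1)) by ring. congr.
Qed.

Lemma root_mod_pow_odd l x k : prime l -> l <> 2 -> ~ (l | x) -> sq_mod l (- x) ->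
  exists Z0, cong (l ^ Z.of_nat k) (x * Z0 * Z0) (-1).
Proof.
  intros Hl H2 Hx Hs. apply root_mod_pow_of_Zl_square; [|apply inverse_mod_pow; auto].
  apply Zl_square_of_sq_mod; auto. rewrite <- Z.divide_opp_r, Z.opp_involutive. exact Hx.
Qed.

Lemma root_mod_units l x Z0 : prime l -> cong l (x * Z0 * Z0) (-1) -> ~ (l | x) /\ ~ (l | Z0).
Proof.
  intros Hl [r Hr]. pose proof (prime_ge_2 l Hl).
  assert (H1 : ~ (l | 1)) by (intros H1; apply Z.divide_pos_le in H1; lia).
  split; intros Hd; apply H1.
  - replace 1 with (x * Z0 * Z0 + 1 - x * (Z0 * Z0)) by ring.
    apply Z.divide_sub_r; [exists r; lia|apply Z.divide_mul_l, Hd].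
  - replace 1 with (x * Z0 * Z0 + 1 - x * Z0 * Z0) by ring.
    apply Z.divide_sub_r; [exists r; lia|apply Z.divide_mul_r, Hd].
Qed.

Ltac units := repeat (apply prime_not_divide_mul; auto).

(* Lifting the root [Z0] of [1 + x z^2] (mod [l^2]) by [l t] with
   [t = d' x c Z0] makes the cofactor [d' A B] congruent to the square
   [(2 d' x c Z0^2)^2] modulo [l]. *)
Lemma quartic_sq_Ql_root l d' x c : prime l -> l <> 2 -> ~ (l | d') -> ~ (l | c) ->
  ~ (l | x) -> sq_mod l (- x) -> quartic_sq_Ql l (l * d') x (x + 2 * c).
Proof.
  intros Hl H2 Hd' Hc Hx Hs.
  destruct (root_mod_pow_odd l x 2 Hl H2 Hx Hs) as [Z0 HZ0].
  assert (HZ0' : cong l (x * Z0 * Z0) (-1)).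
  { eapply cong_divide; [|exact HZ0]. exists l. cbn. ring. }
  destruct (root_mod_units l x Z0 Hl HZ0') as [_ HZu].
  destruct HZ0 as [r Hr]. change (l ^ Z.of_nat 2) with (l ^ 2) in Hr.
  set (t := d' * x * c * Z0).
  set (Zc := Z0 + l * t).
  set (A := l * r + 2 * x * Z0 * t + l * x * t * t).
  set (B := l * A + 2 * c * Zc * Zc).
  exists 0%nat, 1%nat, Zc, (d' * A * B). change (2 * Z.of_nat 1) with 2. split.
  - assert (E1 : 1 + x * Zc * Zc = l * A) by (unfold Zc, A; nia).
    assert (E2 : 1 + (x + 2 * c) * Zc * Zc = B) by (unfold B; rewrite <- E1; ring).
    change (2 * Z.of_nat 0) with 0. rewrite Z.pow_0_r, E1, E2. ring.
  - assert (Hsq : cong l (d' * A * B) ((2 * d' * x * c * Z0 * Z0) * (2 * d' * x * c * Z0 * Z0))).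
    { exists (d' * (r + x * t * t) * B
              + d' * (2 * x * Z0 * t) * (A + 2 * c * (2 * Z0 * t + l * t * t))).
      unfold B, Zc, A, t. ring. }
    apply Zl_square_of_sq_mod; auto.
    + apply (not_divide_cong l _ _ Hsq). units; apply odd_prime_not_divide_2; auto.
    + exists (2 * d' * x * c * Z0 * Z0). apply cong_sym, Hsq.
Qed.

Lemma quartic_sq_Ql_divides_x l d x y : prime l -> l <> 2 -> (l | x) -> ~ (l | y) -> ~ (l | d) ->
  quartic_sq_Ql l d x y.
Proof.
  intros Hl H2 [x' ->] Hy Hd.
  destruct (classic (sq_mod l (- y))) as [Hs|Hs].
  - (* as in [quartic_sq_Ql_root], now with a root modulo [l^3] *)
    destruct (root_mod_pow_odd l y 3 Hl H2 Hy Hs) as [Z0 HZ0].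
    assert (HZ0' : cong l (y * Z0 * Z0) (-1)).
    { eapply cong_divide; [|exact HZ0]. exists (l * l). cbn. ring. }
    destruct (root_mod_units l y Z0 Hl HZ0') as [_ HZu].
    destruct HZ0 as [r Hr]. change (l ^ Z.of_nat 3) with (l ^ 3) in Hr.
    set (t := 2 * d * y * Z0).
    set (Zc := Z0 + l * l * t).
    set (A := l * r + 2 * y * Z0 * t + y * l * l * t * t).
    exists 0%nat, 1%nat, Zc, (d * (1 + x' * l * Zc * Zc) * A).
    change (2 * Z.of_nat 1) with 2. split.
    + assert (E1 : 1 + y * Zc * Zc = l * l * A) by (unfold Zc, A; nia).
      change (2 * Z.of_nat 0) with 0. rewrite Z.pow_0_r, E1. ring.
    + assert (Hsq : cong l (d * (1 + x' * l * Zc * Zc) * A) (2 * d * y * Z0 * (2 * d * y * Z0))).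
      { exists (d * (x' * Zc * Zc) * A + d * (r + y * l * t * t)). unfold A, t. ring. }
      apply Zl_square_of_sq_mod; auto.
      * apply (not_divide_cong l _ _ Hsq). units; apply odd_prime_not_divide_2; auto.
      * exists (2 * d * y * Z0). apply cong_sym, Hsq.
  - destruct (sq_mod_shifted_value l Hl H2 y d Hy Hd Hs) as [z0 [Hz1 Hz2]].
    exists 0%nat, 0%nat, z0, (d * (1 + x' * l * z0 * z0) * (1 + y * z0 * z0)).
    split; [rewrite !pow_even_of_nat; simpl Z.of_nat; ring|].
    assert (Hc : cong l (d * (1 + x' * l * z0 * z0) * (1 + y * z0 * z0)) (d * (1 + y * (z0 * z0)))).
    { exists (d * (x' * z0 * z0) * (1 + y * z0 * z0)). ring. }
    apply Zl_square_of_sq_mod; auto.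
    + apply (not_divide_cong l _ _ Hc), Hz2.
    + apply (sq_mod_cong l _ _ Hz1), cong_sym, Hc.
Qed.

Lemma quartic_sq_Ql_divides_xy l d x' y' : prime l -> l <> 2 -> sq_mod l (d * x' * y') ->
  ~ (l | d * x' * y') -> quartic_sq_Ql l d (l * x') (l * y').
Proof.
  intros Hl H2 Hs Hu.
  exists 1%nat, 1%nat, 1, (d * (l + x') * (l + y')). change (2 * Z.of_nat 1) with 2.
  split; [ring|].
  assert (Hc : cong l (d * (l + x') * (l + y')) (d * x' * y')).
  { exists (d * (l + x' + y')). ring. }
  apply Zl_square_of_sq_mod; auto.
  - apply (not_divide_cong l _ _ Hc), Hu.
  - apply (sq_mod_cong l _ _ Hs), cong_sym, Hc.
Qed.

Lemma quartic_sq_Q2_shift4 d x y : (8 | d * (4 + x) * (4 + y) - 1) -> quartic_sq_Ql 2 d x y.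
Proof.
  intros H. exists 1%nat, 0%nat, 1, (d * (4 + x) * (4 + y)).
  split; [rewrite !pow_even_of_nat; simpl Z.of_nat; ring|]. apply Zl_square_2, H.
Qed.

Lemma quartic_sq_Q2_shift16 d x y : (8 | d * (16 + x) * (16 + y) - 1) -> quartic_sq_Ql 2 d x y.
Proof.
  intros H. exists 2%nat, 0%nat, 1, (d * (16 + x) * (16 + y)).
  split; [rewrite !pow_even_of_nat; simpl Z.of_nat; ring|]. apply Zl_square_2, H.
Qed.

(* A root [Z0] of [1 + x z^2] modulo [2^9] is moved by [16 u] so that the
   cofactor [d A B] becomes the square of an odd number modulo [8]. *)
Lemma quartic_sq_Q2_root d x c : (8 | x + 1) -> Z.odd c = true -> Z.odd d = true ->
  quartic_sq_Ql 2 d x (x + 2 * c).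
Proof.
  intros Hx Hc Hd.
  assert (Hxo : Z.odd x = true).
  { destruct Hx as [k Hk]. apply Z.odd_spec. exists (4 * k - 1). lia. }
  destruct (root_mod_pow_of_Zl_square 2 x 9) as [Z0 [r Hr]].
  - apply Zl_square_2. destruct Hx as [k Hk]. exists (- k). lia.
  - apply inverse_mod_pow; [apply prime_2|]. intros [k Hk].
    apply Z.odd_spec in Hxo as [m Hm]. lia.
  - change (2 ^ Z.of_nat 9) with 512 in Hr.
    assert (HZ0o : Z.odd Z0 = true).
    { destruct (Z.Even_or_Odd Z0) as [[u Hu]|[u Hu]]; [exfalso; subst Z0; nia|].
      apply Z.odd_spec. exists u. exact Hu. }
    set (u := d * x * Z0 * c).
    set (Zc := Z0 + 16 * u).
    set (A := 16 * r + x * Z0 * u + 8 * x * u * u).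
    set (B := 16 * A + c * Zc * Zc).
    exists 0%nat, 3%nat, Zc, (d * A * B). change (2 * Z.of_nat 3) with 6. split.
    + assert (E1 : 1 + x * Zc * Zc = 32 * A) by (unfold Zc, A; nia).
      assert (E2 : 1 + (x + 2 * c) * Zc * Zc = 2 * B)
        by (unfold B; replace (2 * (16 * A + c * Zc * Zc)) with (32 * A + 2 * c * Zc * Zc)
              by ring; rewrite <- E1; ring).
      change (2 * Z.of_nat 0) with 0. rewrite Z.pow_0_r, E1, E2. ring.
    + apply Zl_square_2.
      assert (Hw : Z.odd (d * x * Z0 * c * Zc) = true).
      { unfold Zc. rewrite !Z.odd_mul, Hd, Hxo, HZ0o, Hc, Z.odd_add, Z.odd_mul, HZ0o.
        reflexivity. }
      apply odd_square_mod_8 in Hw as [k Hk].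
      exists (k + d * (2 * r + x * u * u) * B + 2 * d * x * Z0 * u * A).
      replace (d * A * B - 1) with (d * x * Z0 * c * Zc * (d * x * Z0 * c * Zc) - 1
        + 8 * (d * (2 * r + x * u * u) * B + 2 * d * x * Z0 * u * A)) by (unfold B, A, u; ring).
      rewrite Hk. ring.
Qed.

(** * Solubility at [2] *)

Definition good_at_2 (d p e : Z) : bool :=
  (d mod 8 =? 1) || ((d * (4 + p * e) * (4 + (p + 2) * e)) mod 8 =? 1)
  || ((d * p * (p + 2)) mod 8 =? 1) || ((p * e) mod 8 =? 7) || (((p + 2) * e) mod 8 =? 7).

Definition in_I_residues (a p h : Z) : bool :=
  (a mod 8 =? 1) || (((1 + p * h) * (1 + (p + 2) * h)) mod 16 =? 0)
  || ((a mod 8 =? 3) && (p mod 4 =? 1)) || ((a mod 8 =? 7) && (p mod 4 =? 3)).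

Lemma divide_of_mod_eqb n a b : 0 < n -> (a mod n =? b) = true -> 0 <= b < n -> (n | a - b).
Proof.
  intros Hn H Hb. apply Z.eqb_eq in H. apply mod_eq_cong; [lia|]. rewrite H, Z.mod_small; auto.
Qed.

Lemma quartic_sq_Q2 d p e : Z.odd d = true -> Z.odd p = true -> Z.odd e = true ->
  good_at_2 d p e = true -> quartic_sq_Ql 2 d (p * e) ((p + 2) * e).
Proof.
  intros Hd Hp He H. unfold good_at_2 in H. rewrite !orb_true_iff in H.
  destruct H as [[[[H|H]|H]|H]|H]; apply divide_of_mod_eqb in H; try lia.
  - apply quartic_sq_Ql_of_Zl_square, Zl_square_2, H.
  - apply quartic_sq_Q2_shift4, H.
  - apply quartic_sq_Q2_shift16. apply odd_square_mod_8 in He as [k Hk].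
    destruct H as [j Hj].
    exists (j * e * e + k + 2 * d * (p * e + (p + 2) * e) + 32 * d). nia.
  - replace ((p + 2) * e) with (p * e + 2 * e) by ring. apply quartic_sq_Q2_root; auto.
    destruct H as [k Hk]. exists (k + 1). lia.
  - apply quartic_sq_Ql_sym. replace (p * e) with ((p + 2) * e + 2 * (- e)) by ring.
    apply quartic_sq_Q2_root; [|rewrite Z.odd_opp; exact He|exact Hd].
    destruct H as [k Hk]. exists (k + 1). lia.
Qed.

Lemma good_at_2_cong d p e d0 p0 e0 : cong 8 d d0 -> cong 8 p p0 -> cong 8 e e0 ->
  good_at_2 d p e = good_at_2 d0 p0 e0.
Proof.
  intros H1 H2 H3. unfold good_at_2.
  rewrite (cong_mod_eq 8 d d0),
    (cong_mod_eq 8 (d * (4 + p * e) * (4 + (p + 2) * e)) (d0 * (4 + p0 * e0) * (4 + (p0 + 2) * e0))),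
    (cong_mod_eq 8 (d * p * (p + 2)) (d0 * p0 * (p0 + 2))), (cong_mod_eq 8 (p * e) (p0 * e0)),
    (cong_mod_eq 8 ((p + 2) * e) ((p0 + 2) * e0)); try lia; congr.
Qed.

Lemma in_I_residues_cong a p h a0 p0 h0 : cong 16 a a0 -> cong 16 p p0 -> cong 16 h h0 ->
  in_I_residues a p h = in_I_residues a0 p0 h0.
Proof.
  intros H1 H2 H3.
  assert (d8 : (8 | 16)) by (exists 2; lia). assert (d4 : (4 | 16)) by (exists 4; lia).
  unfold in_I_residues.
  rewrite (cong_mod_eq 8 a a0),
    (cong_mod_eq 16 ((1 + p * h) * (1 + (p + 2) * h)) ((1 + p0 * h0) * (1 + (p0 + 2) * h0))),
    (cong_mod_eq 4 p p0); try lia; try congr; eapply cong_divide; eauto.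
Qed.

Definition odd_residues_8 : list Z := [1; 3; 5; 7].
Definition odd_residues_16 : list Z := [1; 3; 5; 7; 9; 11; 13; 15].

Lemma odd_mod_8 x : Z.odd x = true -> In (x mod 8) odd_residues_8.
Proof.
  intros H. apply Z.odd_spec in H as [m Hm]. simpl.
  pose proof (Z.mod_pos_bound x 8). pose proof (Z.div_mod x 8). lia.
Qed.

Lemma odd_mod_16 x : Z.odd x = true -> In (x mod 16) odd_residues_16.
Proof.
  intros H. apply Z.odd_spec in H as [m Hm]. simpl.
  pose proof (Z.mod_pos_bound x 16). pose proof (Z.div_mod x 16). lia.
Qed.

Lemma good_at_2_mul_table :
  forallb (fun p => forallb (fun D => forallb (fun a => forallb (fun b =>
    implb (good_at_2 a p (D * a) && good_at_2 b p (D * b)) (good_at_2 (a * b) p (D * (a * b))))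
    odd_residues_8) odd_residues_8) odd_residues_8) odd_residues_8 = true.
Proof. vm_compute. reflexivity. Qed.

Lemma good_at_2_of_in_I_table :
  forallb (fun p => forallb (fun a => forallb (fun h =>
    implb (in_I_residues a p h) (good_at_2 a p h))
    odd_residues_16) odd_residues_16) odd_residues_16 = true.
Proof. vm_compute. reflexivity. Qed.

Lemma cong_self_mod n x : n <> 0 -> cong n x (x mod n).
Proof. intros Hn. apply cong_sym, cong_mod, Hn. Qed.

Lemma good_at_2_mul p D a b : Z.odd p = true -> Z.odd D = true -> Z.odd a = true ->
  Z.odd b = true -> good_at_2 a p (D * a) = true -> good_at_2 b p (D * b) = true ->
  good_at_2 (a * b) p (D * (a * b)) = true.
Proof.
  intros Hp HD Ha Hb H1 H2. pose proof good_at_2_mul_table as C.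
  assert (R : forall x, cong 8 x (x mod 8)) by (intros; apply cong_self_mod; lia).
  rewrite forallb_forall in C. specialize (C _ (odd_mod_8 p Hp)).
  rewrite forallb_forall in C. specialize (C _ (odd_mod_8 D HD)).
  rewrite forallb_forall in C. specialize (C _ (odd_mod_8 a Ha)).
  rewrite forallb_forall in C. specialize (C _ (odd_mod_8 b Hb)).
  rewrite (good_at_2_cong a p (D * a) (a mod 8) (p mod 8) (D mod 8 * (a mod 8))) in H1
    by (congr; apply R).
  rewrite (good_at_2_cong b p (D * b) (b mod 8) (p mod 8) (D mod 8 * (b mod 8))) in H2
    by (congr; apply R).
  rewrite (good_at_2_cong (a * b) p (D * (a * b))
             (a mod 8 * (b mod 8)) (p mod 8) (D mod 8 * (a mod 8 * (b mod 8)))) by (congr; apply R).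
  rewrite H1, H2 in C. exact C.
Qed.

Lemma good_at_2_of_in_I_residues a p h : Z.odd p = true -> Z.odd a = true -> Z.odd h = true ->
  in_I_residues a p h = true -> good_at_2 a p h = true.
Proof.
  intros Hp Ha Hh H. pose proof good_at_2_of_in_I_table as C.
  assert (R : forall x, cong 16 x (x mod 16)) by (intros; apply cong_self_mod; lia).
  rewrite forallb_forall in C. specialize (C _ (odd_mod_16 p Hp)).
  rewrite forallb_forall in C. specialize (C _ (odd_mod_16 a Ha)).
  rewrite forallb_forall in C. specialize (C _ (odd_mod_16 h Hh)).
  rewrite (in_I_residues_cong a p h (a mod 16) (p mod 16) (h mod 16)) in H by apply R.
  rewrite H in C.
  assert (d8 : (8 | 16)) by (exists 2; lia).
  rewrite (good_at_2_cong a p h (a mod 16) (p mod 16) (h mod 16));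
    [exact C| |  |]; eapply cong_divide; eauto.
Qed.

Lemma zprod_cons a s : zprod (a :: s) = a * zprod s.
Proof. reflexivity. Qed.

Lemma zprod_app s1 s2 : zprod (s1 ++ s2) = zprod s1 * zprod s2.
Proof.
  induction s1 as [|a s1 IH]; cbn [app].
  - change (zprod []) with 1. ring.
  - rewrite !zprod_cons, IH. ring.
Qed.

Lemma zprod_perm s1 s2 : Permutation s1 s2 -> zprod s1 = zprod s2.
Proof. unfold zprod. induction 1; cbn [fold_right]; try ring; congruence. Qed.

Lemma zprod_primes_pos ps : Forall prime ps -> 0 < zprod ps.
Proof.
  induction 1 as [|a ps Ha _ IH]; [reflexivity|]. rewrite zprod_cons.
  pose proof (prime_ge_2 a Ha). nia.
Qed.

Lemma prime_divide_zprod_primes a ps : prime a -> Forall prime ps -> (a | zprod ps) -> In a ps.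
Proof.
  intros Ha. induction 1 as [|b ps Hb _ IH]; intros H.
  - apply Z.divide_1_r_abs in H. pose proof (prime_ge_2 a Ha). lia.
  - rewrite zprod_cons in H. apply (prime_mult a Ha) in H as [H|H].
    + left. symmetry. apply prime_div_prime; assumption.
    + right. apply IH, H.
Qed.

Lemma zprod_split_in a ps : In a ps -> exists rest,
  zprod ps = a * zprod rest /\ (NoDup ps -> ~ In a rest) /\ incl rest ps.
Proof.
  intros Ha. apply in_split in Ha as (s1 & s2 & ->). exists (s1 ++ s2). split; [|split].
  - rewrite !zprod_app, zprod_cons. ring.
  - apply NoDup_remove_2.
  - intros x Hx. apply in_app_or in Hx as [Hx|Hx]; apply in_or_app; simpl; auto.
Qed.

Lemma squarefree_zprod_primes ps : Forall prime ps -> NoDup ps -> squarefree (zprod ps).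
Proof.
  intros Hps Hnd. split; [pose proof (zprod_primes_pos ps Hps); lia|].
  induction Hps as [|a ps Ha Hps IH]; intros k Hk.
  { apply Z.divide_1_r_abs in Hk. rewrite Z.abs_mul in Hk. nia. }
  apply NoDup_cons_iff in Hnd as [Hnin Hnd]. rewrite zprod_cons in Hk.
  destruct (Zdivide_dec a k) as [[c ->]|Hak].
  - exfalso. apply Hnin, prime_divide_zprod_primes; auto.
    pose proof (prime_ge_2 a Ha).
    apply (Z.mul_divide_cancel_l _ _ a); [lia|].
    eapply Z.divide_trans; [|exact Hk]. exists (c * c). ring.
  - apply IH; [exact Hnd|]. apply (Gauss _ a); [exact Hk|].
    apply rel_prime_sym, rel_prime_mult; apply prime_rel_prime; assumption.
Qed.

Lemma incl_of_square_zprod_primes ps1 ps2 : Forall prime ps1 -> Forall prime ps2 ->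
  NoDup ps1 -> (exists x, zprod ps1 * zprod ps2 = x * x) -> incl ps1 ps2.
Proof.
  intros H1 H2 Hnd [x Hx] a Ha. apply NNPP. intros Hn.
  destruct (zprod_split_in a ps1 Ha) as (rest & E & Hrest & Hincl).
  assert (Hpa : prime a) by (rewrite Forall_forall in H1; auto).
  pose proof (prime_ge_2 a Hpa).
  assert (Hx' : (a | x)).
  { assert (Hxx : (a | x * x)) by (rewrite <- Hx, E; apply Z.divide_mul_l, Z.divide_mul_l, Z.divide_refl).
    apply (prime_mult a Hpa) in Hxx as [Hxx|Hxx]; exact Hxx. }
  destruct Hx' as [y ->].
  assert (Hd : (a | zprod rest * zprod ps2)).
  { exists (y * y). apply (Z.mul_reg_l _ _ a); [lia|]. rewrite Z.mul_assoc, <- E, Hx. ring. }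
  apply (prime_mult a Hpa) in Hd as [Hd|Hd];
    apply prime_divide_zprod_primes in Hd; auto.
  - exact (Hrest Hnd Hd).
  - apply incl_Forall with ps1; assumption.
Qed.

Lemma map_nth_seq_self {A} (s : list A) d : map (fun i => nth i s d) (seq 0 (length s)) = s.
Proof.
  apply (nth_ext _ _ d d); [rewrite length_map, length_seq; reflexivity|].
  intros n Hn. rewrite length_map, length_seq in Hn.
  rewrite (nth_indep _ d ((fun i => nth i s d) 0%nat))
    by (rewrite length_map, length_seq; exact Hn).
  rewrite (map_nth (fun i => nth i s d) _ 0%nat n), seq_nth by exact Hn. reflexivity.
Qed.

Lemma Dprod_seq Ds : Dprod Ds = prodD Ds (seq 0 (length Ds)).
Proof. unfold Dprod, prodD, Di. rewrite map_nth_seq_self. reflexivity. Qed.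

Definition del_index (i : nat) (U : list nat) : list nat :=
  filter (fun j => negb (Nat.eqb j i)) U.

Definition compl_index (n : nat) (U : list nat) : list nat :=
  filter (fun j => negb (existsb (Nat.eqb j) U)) (seq 0 n).

Lemma in_del_index i U x : In x (del_index i U) <-> In x U /\ x <> i.
Proof. unfold del_index. rewrite filter_In, negb_true_iff, Nat.eqb_neq. reflexivity. Qed.

Lemma in_compl_index n U x : In x (compl_index n U) <-> (x < n)%nat /\ ~ In x U.
Proof.
  unfold compl_index. rewrite filter_In, in_seq, negb_true_iff.
  assert (E : existsb (Nat.eqb x) U = true <-> In x U).
  { rewrite existsb_exists. split.
    - intros [y [Hy E]]. apply Nat.eqb_eq in E. subst. exact Hy.
    - intros H. exists x. rewrite Nat.eqb_refl. auto. }
  destruct (existsb (Nat.eqb x) U); intuition (try lia; discriminate).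
Qed.

Lemma NoDup_compl_index n U : NoDup (compl_index n U).
Proof. apply NoDup_filter, seq_NoDup. Qed.

Lemma prodD_del_index Ds U i : NoDup U -> In i U -> prodD Ds U = Di Ds i * prodD Ds (del_index i U).
Proof.
  intros Hnd Hi. unfold prodD.
  change (Di Ds i * zprod (map (Di Ds) (del_index i U))) with
    (zprod (map (Di Ds) (i :: del_index i U))).
  apply zprod_perm, Permutation_map, NoDup_Permutation; auto.
  - constructor; [rewrite in_del_index; tauto|apply NoDup_filter, Hnd].
  - intros x. simpl. rewrite in_del_index.
    destruct (Nat.eq_dec i x); intuition congruence.
Qed.

Lemma Dprod_split Ds U : NoDup U -> (forall i, In i U -> (i < length Ds)%nat) ->
  Dprod Ds = prodD Ds U * prodD Ds (compl_index (length Ds) U).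
Proof.
  intros Hnd Hr. rewrite Dprod_seq. unfold prodD. rewrite <- zprod_app, <- map_app.
  apply zprod_perm, Permutation_map, NoDup_Permutation; [apply seq_NoDup| |].
  - apply NoDup_app; [exact Hnd|apply NoDup_compl_index|].
    intros x H1 H2. apply in_compl_index in H2. tauto.
  - intros x. rewrite in_app_iff, in_compl_index, in_seq.
    destruct (classic (In x U)) as [H|H]; [pose proof (Hr x H)|]; intuition lia.
Qed.

Section Subproducts.
Variable Ds : list Z.
Hypothesis Hpr : Forall prime Ds.
Hypothesis Hnd : NoDup Ds.

Lemma Di_prime i : (i < length Ds)%nat -> prime (Di Ds i).
Proof. intros H. unfold Di. rewrite Forall_nth in Hpr. apply Hpr, H. Qed.

Lemma Di_inj i j : (i < length Ds)%nat -> (j < length Ds)%nat -> Di Ds i = Di Ds j -> i = j.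
Proof. intros Hi Hj E. rewrite NoDup_nth in Hnd. eapply Hnd; eauto. Qed.

Section IndexList.
Variable U : list nat.
Hypothesis HU : forall i, In i U -> (i < length Ds)%nat.

Lemma prodD_primes : Forall prime (map (Di Ds) U).
Proof.
  apply Forall_forall. intros x Hx. apply in_map_iff in Hx as [i [<- Hi]].
  apply Di_prime, HU, Hi.
Qed.

Lemma prodD_pos : 0 < prodD Ds U.
Proof. apply zprod_primes_pos, prodD_primes. Qed.

Lemma squarefree_prodD : NoDup U -> squarefree (prodD Ds U).
Proof.
  intros HnU. apply squarefree_zprod_primes; [apply prodD_primes|].
  apply NoDup_map_inj; [exact HnU|]. intros i j Hi Hj. apply Di_inj; auto.
Qed.

Lemma prime_divide_prodD l : prime l -> (l | prodD Ds U) -> exists k, In k U /\ l = Di Ds k.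
Proof.
  intros Hl H. apply prime_divide_zprod_primes, in_map_iff in H as [k [E Hk]];
    [exists k; auto|exact Hl|apply prodD_primes].
Qed.

Lemma Di_not_divide_prodD k : (k < length Ds)%nat -> ~ In k U -> ~ (Di Ds k | prodD Ds U).
Proof.
  intros Hk Hn H. apply prime_divide_prodD in H as [j [Hj E]]; [|apply Di_prime, Hk].
  apply Di_inj in E; [subst; contradiction|exact Hk|apply HU, Hj].
Qed.

End IndexList.

Lemma Dhat_spec i : (i < length Ds)%nat -> Dprod Ds = Di Ds i * Dhat Ds i.
Proof.
  intros Hi. unfold Dhat.
  rewrite Dprod_seq, (prodD_del_index Ds _ i (seq_NoDup _ _)) by (apply in_seq; lia).
  pose proof (prime_ge_2 _ (Di_prime i Hi)).
  rewrite (Z.mul_comm (Di Ds i) (prodD Ds _)) at 2. rewrite Z.div_mul by lia. ring.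
Qed.

Lemma incl_of_square_prodD U1 U2 :
  (forall i, In i U1 -> (i < length Ds)%nat) -> (forall i, In i U2 -> (i < length Ds)%nat) ->
  NoDup U1 -> (exists x, prodD Ds U1 * prodD Ds U2 = x * x) -> incl U1 U2.
Proof.
  intros H1 H2 Hn1 Hsq i Hi.
  assert (Hin : In (Di Ds i) (map (Di Ds) U2)).
  { apply (incl_of_square_zprod_primes (map (Di Ds) U1)); auto using prodD_primes.
    - apply NoDup_map_inj; [exact Hn1|]. intros a b Ha Hb. apply Di_inj; auto.
    - apply in_map, Hi. }
  apply in_map_iff in Hin as [j [E Hj]]. apply Di_inj in E; auto. subst. exact Hj.
Qed.

End Subproducts.

Lemma legendre_defect_nonneg a b l l' : 0 <= (1 - legendre a l) * (1 - legendre b l').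
Proof. pose proof (legendre_bounds a l). pose proof (legendre_bounds b l'). nia. Qed.

Lemma legendre_defect_zero a b l l' : (1 - legendre a l) * (1 - legendre b l') = 0 ->
  legendre a l = 1 \/ legendre b l' = 1.
Proof. intros H. apply Z.mul_eq_0 in H. lia. Qed.

Lemma zsum_cons a s : zsum (a :: s) = a + zsum s.
Proof. reflexivity. Qed.

Lemma zsum_nonneg s : (forall x, In x s -> 0 <= x) -> 0 <= zsum s.
Proof.
  induction s as [|a s IH]; intros H; [reflexivity|]. rewrite zsum_cons.
  specialize (IH (fun x Hx => H x (or_intror Hx))). specialize (H a (or_introl eq_refl)). lia.
Qed.

Lemma zsum_eq_0 s : (forall x, In x s -> 0 <= x) -> zsum s = 0 -> forall x, In x s -> x = 0.
Proof.
  induction s as [|a s IH]; intros H Hs x Hx; [contradiction|]. rewrite zsum_cons in Hs.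
  assert (Hs' : forall y, In y s -> 0 <= y) by (intros y Hy; apply H; right; exact Hy).
  pose proof (zsum_nonneg s Hs'). pose proof (H a (or_introl eq_refl)).
  destruct Hx as [<-|Hx]; [lia|]. apply IH; auto. lia.
Qed.

Section PiPlus.
Variables (p q : Z) (Ds : list Z).

Definition Pi_plus_others (i : nat) : list Z :=
  map (fun j => (1 - legendre (Di Ds i) (Di Ds j)) * (1 - legendre (p * q * Di Ds i) (Di Ds j)))
      (del_index i (seq 0 (length Ds))).

Lemma Pi_plus_others_nonneg i x : In x (Pi_plus_others i) -> 0 <= x.
Proof. intros Hx. apply in_map_iff in Hx as [j [<- _]]. apply legendre_defect_nonneg. Qed.

Lemma Pi_plus_nonneg i : 0 <= Pi_plus p q Ds i.
Proof.
  pose proof (zsum_nonneg _ (Pi_plus_others_nonneg i)).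
  pose proof (legendre_defect_nonneg (- p * Dhat Ds i) (- q * Dhat Ds i) (Di Ds i) (Di Ds i)).
  unfold Pi_plus. fold (del_index i (seq 0 (length Ds))). fold (Pi_plus_others i). lia.
Qed.

Lemma Pi_plus_eq_0_self i : Pi_plus p q Ds i = 0 ->
  legendre (- p * Dhat Ds i) (Di Ds i) = 1 \/ legendre (- q * Dhat Ds i) (Di Ds i) = 1.
Proof.
  intros H. apply legendre_defect_zero.
  pose proof (zsum_nonneg _ (Pi_plus_others_nonneg i)).
  pose proof (legendre_defect_nonneg (- p * Dhat Ds i) (- q * Dhat Ds i) (Di Ds i) (Di Ds i)).
  unfold Pi_plus in H. fold (del_index i (seq 0 (length Ds))) in H.
  fold (Pi_plus_others i) in H. lia.
Qed.

Lemma Pi_plus_eq_0_other i j : Pi_plus p q Ds i = 0 -> (j < length Ds)%nat -> j <> i ->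
  legendre (Di Ds i) (Di Ds j) = 1 \/ legendre (p * q * Di Ds i) (Di Ds j) = 1.
Proof.
  intros H Hj Hji. apply legendre_defect_zero.
  pose proof (zsum_nonneg _ (Pi_plus_others_nonneg i)).
  pose proof (legendre_defect_nonneg (- p * Dhat Ds i) (- q * Dhat Ds i) (Di Ds i) (Di Ds i)).
  unfold Pi_plus in H. fold (del_index i (seq 0 (length Ds))) in H.
  fold (Pi_plus_others i) in H.
  apply (zsum_eq_0 _ (Pi_plus_others_nonneg i)); [lia|].
  apply in_map_iff. exists j. rewrite in_del_index, in_seq. split; [reflexivity|lia].
Qed.

(* [[1 / (1 + Pi)]] is [1] if [Pi = 0] and [0] if [Pi > 0]. *)
Lemma rho_plus_count :
  rho_plus p q Ds = Z.of_nat (length (filter (fun i => Pi_plus p q Ds i =? 0)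
                                        (filter (in_I p q Ds) (seq 0 (length Ds))))).
Proof.
  unfold rho_plus. induction (filter (in_I p q Ds) (seq 0 (length Ds))) as [|a L IH];
    [reflexivity|].
  cbn [map filter]. rewrite zsum_cons, IH. pose proof (Pi_plus_nonneg a).
  destruct (Z.eqb_spec (Pi_plus p q Ds a) 0) as [->|E].
  - rewrite Z.add_0_r, Z.div_1_r. cbn [length]. lia.
  - rewrite Z.div_small by lia. reflexivity.
Qed.

End PiPlus.

Lemma legendre_one_or_c_mul l c a b : prime l -> l <> 2 ->
  ~ (l | c) -> ~ (l | a) -> ~ (l | b) ->
  legendre a l = 1 \/ legendre (c * a) l = 1 -> legendre b l = 1 \/ legendre (c * b) l = 1 ->
  legendre (a * b) l = 1 \/ legendre (c * (a * b)) l = 1.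
Proof.
  intros Hl H2 Hc Ha Hb. rewrite !legendre_mul by auto.
  destruct (legendre_unit l Hl H2 c Hc) as [-> | ->];
    destruct (legendre_unit l Hl H2 a Ha) as [-> | ->];
    destruct (legendre_unit l Hl H2 b Hb) as [-> | ->]; lia.
Qed.

Lemma legendre_one_or_c_prodD l c Ds U : prime l -> l <> 2 -> ~ (l | c) ->
  (forall i, In i U -> ~ (l | Di Ds i)) ->
  (forall i, In i U -> legendre (Di Ds i) l = 1 \/ legendre (c * Di Ds i) l = 1) ->
  (legendre (prodD Ds U) l = 1 \/ legendre (c * prodD Ds U) l = 1) /\ ~ (l | prodD Ds U).
Proof.
  intros Hl H2 Hc. induction U as [|a U IH]; intros Hu Hs.
  - assert (H1 : ~ (l | 1)).
    { intros H. apply Z.divide_1_r_abs in H. pose proof (prime_ge_2 l Hl). lia. }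
    split; [left|exact H1]. apply legendre_sq; auto. exists 1. apply cong_refl.
  - destruct IH as [IH1 IH2]; [intros i Hi; apply Hu; right; exact Hi
                              |intros i Hi; apply Hs; right; exact Hi|].
    change (prodD Ds (a :: U)) with (Di Ds a * prodD Ds U).
    assert (Ha : ~ (l | Di Ds a)) by (apply Hu; left; reflexivity).
    split; [|apply prime_not_divide_mul; auto].
    apply legendre_one_or_c_mul; auto. apply Hs. left. reflexivity.
Qed.

Lemma legendre_one_of_product l a b s : prime l -> l <> 2 ->
  ~ (l | a) -> ~ (l | b) -> ~ (l | s) ->
  legendre (a * s) l = 1 \/ legendre (b * s) l = 1 ->
  legendre s l = 1 \/ legendre (a * b * s) l = 1 ->
  legendre a l = 1 \/ legendre b l = 1.
Proof.
  intros Hl H2 Ha Hb Hs. rewrite !legendre_mul by auto.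
  destruct (legendre_unit l Hl H2 a Ha) as [-> | ->];
    destruct (legendre_unit l Hl H2 b Hb) as [-> | ->];
    destruct (legendre_unit l Hl H2 s Hs) as [-> | ->]; lia.
Qed.

Lemma Cd_Ql_point_at_2 p q D d e : q = p + 2 -> D = d * e ->
  Z.odd d = true -> Z.odd p = true -> Z.odd e = true -> good_at_2 d p e = true ->
  Cd_Ql_point p q D d 2.
Proof.
  intros -> HD Hd Hp He H. apply (Cd_Ql_point_of_quartic_sq _ _ _ d e); [lia|exact HD|].
  apply quartic_sq_Q2; assumption.
Qed.

Lemma Cd_Ql_point_at_p p q D d e : prime p -> p <> 2 -> D = d * e ->
  ~ (p | d) -> ~ (p | q * e) -> Cd_Ql_point p q D d p.
Proof.
  intros Hp H2 HD Hd Hqe. pose proof (prime_ge_2 p Hp).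
  apply (Cd_Ql_point_of_quartic_sq _ _ _ d e); [lia|exact HD|].
  apply quartic_sq_Ql_divides_x; auto using Z.divide_mul_l, Z.divide_refl.
Qed.

Lemma Cd_Ql_point_at_q p q D d e : prime q -> q <> 2 -> D = d * e ->
  ~ (q | d) -> ~ (q | p * e) -> Cd_Ql_point p q D d q.
Proof.
  intros Hq H2 HD Hd Hpe. pose proof (prime_ge_2 q Hq).
  apply (Cd_Ql_point_of_quartic_sq _ _ _ d e); [lia|exact HD|].
  apply quartic_sq_Ql_sym, quartic_sq_Ql_divides_x; auto using Z.divide_mul_l, Z.divide_refl.
Qed.

Lemma Cd_Ql_point_at_divisor_of_d l p q D d' e : prime l -> l <> 2 -> q = p + 2 ->
  D = (l * d') * e -> ~ (l | d') -> ~ (l | p * e) -> ~ (l | q * e) ->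
  sq_mod l (- (p * e)) \/ sq_mod l (- (q * e)) -> Cd_Ql_point p q D (l * d') l.
Proof.
  intros Hl H2 Hqp HD Hd' Hpe Hqe Hs. pose proof (prime_ge_2 l Hl).
  assert (He : ~ (l | e)) by (intros Hle; apply Hpe, Z.divide_mul_r, Hle).
  apply (Cd_Ql_point_of_quartic_sq _ _ _ (l * d') e); [lia|exact HD|].
  destruct Hs as [Hs|Hs].
  - replace (q * e) with (p * e + 2 * e) by lia. apply quartic_sq_Ql_root; auto.
  - apply quartic_sq_Ql_sym. replace (p * e) with (q * e + 2 * (- e)) by lia.
    apply quartic_sq_Ql_root; auto. rewrite <- Z.divide_opp_r, Z.opp_involutive. exact He.
Qed.

Lemma Cd_Ql_point_at_divisor_of_e l p q D d e' : prime l -> l <> 2 ->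
  D = d * (l * e') -> ~ (l | p * q * d * (e' * e')) ->
  sq_mod l d \/ sq_mod l (p * q * d) -> Cd_Ql_point p q D d l.
Proof.
  intros Hl H2 HD Hu Hs. pose proof (prime_ge_2 l Hl).
  apply (Cd_Ql_point_of_quartic_sq _ _ _ d (l * e')); [lia|exact HD|].
  destruct Hs as [Hs|Hs].
  - apply quartic_sq_Ql_of_Zl_square, Zl_square_of_sq_mod; auto.
    intros Hld. apply Hu, Z.divide_mul_l, Z.divide_mul_r, Hld.
  - replace (p * (l * e')) with (l * (p * e')) by ring.
    replace (q * (l * e')) with (l * (q * e')) by ring.
    apply quartic_sq_Ql_divides_xy; auto.
    + apply (sq_mod_cong l (p * q * d * (e' * e'))); [apply sq_mod_mul; auto using sq_mod_square|].
      replace (d * (p * e') * (q * e')) with (p * q * d * (e' * e')) by ring. apply cong_refl.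
    + replace (d * (p * e') * (q * e')) with (p * q * d * (e' * e')) by ring. exact Hu.
Qed.

(** * The Selmer subgroup generated by [T] *)

Lemma odd_of_not_divide_2 x : ~ (2 | x) -> Z.odd x = true.
Proof.
  intros H. destruct (Z.Even_or_Odd x) as [[u Hu]|[u Hu]].
  - exfalso. apply H. exists u. lia.
  - apply Z.odd_spec. exists u. exact Hu.
Qed.

Lemma prodD_odd Ds U : (forall i, In i U -> Z.odd (Di Ds i) = true) -> Z.odd (prodD Ds U) = true.
Proof.
  induction U as [|a U IH]; intros H; [reflexivity|].
  change (prodD Ds (a :: U)) with (Di Ds a * prodD Ds U).
  rewrite Z.odd_mul, H, IH; [reflexivity|intros i Hi; apply H; right; exact Hi|left; reflexivity].
Qed.

Section Theorem1p3.
Variables (p q : Z) (Ds : list Z).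
Hypotheses (Hp : prime p) (Hq : prime q) (Hpo : Z.odd p = true) (Hqo : Z.odd q = true)
  (Hqp : q - p = 2) (Hnd : NoDup Ds) (Hpr : Forall prime Ds)
  (H2D : ~ (2 | Dprod Ds)) (HpD : ~ (p | Dprod Ds)) (HqD : ~ (q | Dprod Ds)).

Definition selmer_indices : list nat :=
  filter (fun i => Pi_plus p q Ds i =? 0) (filter (in_I p q Ds) (seq 0 (length Ds))).

Lemma in_selmer_indices i : In i selmer_indices <->
  (i < length Ds)%nat /\ in_I p q Ds i = true /\ Pi_plus p q Ds i = 0.
Proof. unfold selmer_indices. rewrite !filter_In, in_seq, Z.eqb_eq. intuition lia. Qed.

Lemma selmer_indices_range U : incl U selmer_indices -> forall i, In i U -> (i < length Ds)%nat.
Proof. intros H i Hi. apply in_selmer_indices, H, Hi. Qed.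

Lemma compl_index_range U i : In i (compl_index (length Ds) U) -> (i < length Ds)%nat.
Proof. rewrite in_compl_index. tauto. Qed.

Lemma Di_divide_D i : (i < length Ds)%nat -> (Di Ds i | Dprod Ds).
Proof. intros Hi. rewrite (Dhat_spec Ds Hpr i Hi). apply Z.divide_factor_l. Qed.

Lemma Di_odd_prime i : (i < length Ds)%nat ->
  prime (Di Ds i) /\ Di Ds i <> 2 /\ Z.odd (Di Ds i) = true /\ ~ (Di Ds i | p * q).
Proof.
  intros Hi. pose proof (Di_prime Ds Hpr i Hi) as Hl. pose proof (Di_divide_D i Hi) as Hd.
  split; [exact Hl|split; [|split]].
  - intros E. apply H2D. rewrite <- E. exact Hd.
  - apply odd_of_not_divide_2. intros H. apply H2D. eapply Z.divide_trans; eauto.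
  - apply prime_not_divide_mul; [exact Hl|intros H; apply prime_div_prime in H; auto..].
    + apply HpD. rewrite <- H. exact Hd.
    + apply HqD. rewrite <- H. exact Hd.
Qed.

Lemma D_odd : Z.odd (Dprod Ds) = true.
Proof. apply odd_of_not_divide_2, H2D. Qed.

Lemma prodD_odd_range U : (forall i, In i U -> (i < length Ds)%nat) -> Z.odd (prodD Ds U) = true.
Proof. intros H. apply prodD_odd. intros i Hi. apply Di_odd_prime, H, Hi. Qed.

Lemma in_I_residues_Di i : in_I p q Ds i = in_I_residues (Di Ds i) p (Dhat Ds i).
Proof. unfold in_I, in_I_residues. replace q with (p + 2) by lia. reflexivity. Qed.

(* For [i] in [I], [D D_i = D_i^2 \hat D_i] and [\hat D_i] agree modulo [8]. *)
Lemma good_at_2_selmer V : incl V selmer_indices ->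
  good_at_2 (prodD Ds V) p (Dprod Ds * prodD Ds V) = true.
Proof.
  induction V as [|a V IH]; intros Hinc; [reflexivity|].
  apply incl_cons_inv in Hinc as [Ha HV].
  apply in_selmer_indices in Ha as (Han & HaI & _).
  destruct (Di_odd_prime a Han) as (_ & _ & Hao & _).
  assert (HDE := Dhat_spec Ds Hpr a Han).
  assert (Hho : Z.odd (Dhat Ds a) = true).
  { apply odd_of_not_divide_2. intros H. apply H2D. rewrite HDE. apply Z.divide_mul_r, H. }
  change (prodD Ds (a :: V)) with (Di Ds a * prodD Ds V).
  apply good_at_2_mul; auto using D_odd.
  - apply prodD_odd_range, selmer_indices_range, HV.
  - rewrite in_I_residues_Di in HaI.
    rewrite (good_at_2_cong _ _ _ (Di Ds a) p (Dhat Ds a)); try apply cong_refl.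
    + apply good_at_2_of_in_I_residues; assumption.
    + apply odd_square_mod_8 in Hao as [k Hk]. exists (k * Dhat Ds a). rewrite HDE.
      replace (Di Ds a * Dhat Ds a * Di Ds a - Dhat Ds a)
        with (Dhat Ds a * (Di Ds a * Di Ds a - 1)) by ring.
      rewrite Hk. ring.
Qed.

Section Subset.
Variable U : list nat.
Hypotheses (HU : incl U selmer_indices) (HnU : NoDup U).

Let d := prodD Ds U.
Let e := prodD Ds (compl_index (length Ds) U).

Lemma D_eq_de : Dprod Ds = d * e.
Proof. apply Dprod_split; [exact HnU|apply selmer_indices_range, HU]. Qed.

Lemma local_at_2 : Cd_Ql_point p q (Dprod Ds) d 2.
Proof.
  assert (Hdo : Z.odd d = true) by apply prodD_odd_range, selmer_indices_range, HU.
  assert (Heo : Z.odd e = true) by (apply prodD_odd_range; intros i; apply compl_index_range).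
  apply (Cd_Ql_point_at_2 _ _ _ d e); auto using D_eq_de; [lia|].
  rewrite (good_at_2_cong d p e d p (Dprod Ds * d)); try apply cong_refl.
  - apply good_at_2_selmer, HU.
  - apply odd_square_mod_8 in Hdo as [k Hk]. exists (- (e * k)).
    rewrite D_eq_de. replace (e - d * e * d) with (- e * (d * d - 1)) by ring. rewrite Hk. ring.
Qed.

Lemma local_at_p : Cd_Ql_point p q (Dprod Ds) d p.
Proof.
  apply (Cd_Ql_point_at_p _ _ _ d e); auto using D_eq_de.
  - intros E. rewrite E in Hpo. discriminate.
  - intros H. apply HpD. rewrite D_eq_de. apply Z.divide_mul_l, H.
  - apply prime_not_divide_mul; auto.
    + intros H. apply prime_div_prime in H; auto. lia.
    + intros H. apply HpD. rewrite D_eq_de. apply Z.divide_mul_r, H.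
Qed.

Lemma local_at_q : Cd_Ql_point p q (Dprod Ds) d q.
Proof.
  apply (Cd_Ql_point_at_q _ _ _ d e); auto using D_eq_de.
  - intros E. rewrite E in Hqo. discriminate.
  - intros H. apply HqD. rewrite D_eq_de. apply Z.divide_mul_l, H.
  - apply prime_not_divide_mul; auto.
    + intros H. apply prime_div_prime in H; auto. lia.
    + intros H. apply HqD. rewrite D_eq_de. apply Z.divide_mul_r, H.
Qed.

Lemma Di_not_divide_others j V : (j < length Ds)%nat -> ~ In j V ->
  forall k, In k V -> (k < length Ds)%nat -> ~ (Di Ds j | Di Ds k).
Proof.
  intros Hj Hn k Hk Hkn H. apply prime_div_prime in H; [|apply Di_prime; auto..].
  apply (Di_inj Ds Hnd) in H; auto. subst. contradiction.
Qed.

Lemma local_at_Dj_in j : In j U -> Cd_Ql_point p q (Dprod Ds) d (Di Ds j).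
Proof.
  intros Hju. set (l := Di Ds j). set (d' := prodD Ds (del_index j U)).
  assert (Hj : (j < length Ds)%nat) by (apply (selmer_indices_range U HU), Hju).
  destruct (Di_odd_prime j Hj) as (Hl & Hl2 & _ & Hpq).
  assert (Hrange : forall i, In i (del_index j U) -> (i < length Ds)%nat)
    by (intros i Hi; apply in_del_index in Hi; apply (selmer_indices_range U HU); tauto).
  assert (Hd : d = l * d') by (apply prodD_del_index; auto).
  assert (He : ~ (l | e)).
  { apply Di_not_divide_prodD; auto; [apply compl_index_range|]. rewrite in_compl_index. tauto. }
  assert (Hhat : Dhat Ds j = d' * e).
  { pose proof (prime_ge_2 l Hl). apply (Z.mul_reg_l _ _ l); [lia|].
    transitivity (Dprod Ds); [symmetry; apply Dhat_spec; assumption|].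
    rewrite D_eq_de, Hd. ring. }
  destruct (legendre_one_or_c_prodD l (p * q) Ds (del_index j U)) as [Hd' Hd'u]; auto.
  { intros k Hk. apply (Di_not_divide_others j (del_index j U) Hj);
      [rewrite in_del_index; tauto|exact Hk|apply Hrange, Hk]. }
  { intros k Hk. apply in_del_index in Hk as [Hk Hkj].
    apply (Pi_plus_eq_0_other p q Ds k j); auto.
    apply in_selmer_indices, HU, Hk. }
  fold d' in Hd', Hd'u.
  assert (Hpe : ~ (l | p * e)) by (apply prime_not_divide_mul; auto; intros H; apply Hpq, Z.divide_mul_l, H).
  assert (Hqe : ~ (l | q * e)) by (apply prime_not_divide_mul; auto; intros H; apply Hpq, Z.divide_mul_r, H).
  rewrite Hd, D_eq_de, Hd.
  apply (Cd_Ql_point_at_divisor_of_d _ _ _ _ d' e); auto; [lia|].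
  (* [Pi_j = 0] makes [-p d' e] or [-q d' e] a square, and [d'] lies in the
     square class of [1] or [p q]. *)
  assert (Hleg : legendre (- (p * e)) l = 1 \/ legendre (- (q * e)) l = 1).
  { apply (legendre_one_of_product l _ _ d'); auto;
      try (rewrite <- Z.divide_opp_r, Z.opp_involutive; assumption).
    - replace (- (p * e) * d') with (- p * Dhat Ds j) by (rewrite Hhat; ring).
      replace (- (q * e) * d') with (- q * Dhat Ds j) by (rewrite Hhat; ring).
      apply Pi_plus_eq_0_self, in_selmer_indices, HU, Hju.
    - replace (- (p * e) * - (q * e) * d') with (p * q * d' * (e * e)) by ring.
      rewrite (legendre_mul l Hl Hl2 (p * q * d')), (legendre_sq l Hl Hl2 (e * e));
        auto using sq_mod_square, prime_not_divide_mul. lia. }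
  destruct Hleg as [H|H]; apply legendre_eq_1 in H; auto; tauto.
Qed.

Lemma local_at_Dj_out j : (j < length Ds)%nat -> ~ In j U ->
  Cd_Ql_point p q (Dprod Ds) d (Di Ds j).
Proof.
  intros Hj Hju. set (l := Di Ds j). set (e' := prodD Ds (del_index j (compl_index (length Ds) U))).
  destruct (Di_odd_prime j Hj) as (Hl & Hl2 & _ & Hpq).
  assert (HUr := selmer_indices_range U HU).
  assert (Hjc : In j (compl_index (length Ds) U)) by (apply in_compl_index; auto).
  assert (He : e = l * e') by (apply prodD_del_index; auto using NoDup_compl_index).
  assert (He' : ~ (l | e')).
  { apply Di_not_divide_prodD; auto; [|rewrite in_del_index; tauto].
    intros i Hi. apply in_del_index in Hi as [Hi _]. apply compl_index_range in Hi. exact Hi. }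
  destruct (legendre_one_or_c_prodD l (p * q) Ds U) as [Hd Hdu]; auto.
  { intros k Hk. apply (Di_not_divide_others j U Hj Hju k Hk), HUr, Hk. }
  { intros k Hk. apply (Pi_plus_eq_0_other p q Ds k j); [apply in_selmer_indices, HU, Hk|exact Hj|].
    intros ->. contradiction. }
  fold d in Hd, Hdu.
  apply (Cd_Ql_point_at_divisor_of_e _ _ _ _ _ e'); auto.
  - rewrite D_eq_de, He. reflexivity.
  - replace (p * q * d * (e' * e')) with (p * q * (d * (e' * e'))) by ring.
    apply prime_not_divide_mul; [exact Hl|exact Hpq|].
    repeat apply prime_not_divide_mul; auto.
  - destruct Hd as [H|H]; apply legendre_eq_1 in H; auto; tauto.
Qed.

Lemma local_at_S l : In l (S_primes p q Ds) -> Cd_Ql_point p q (Dprod Ds) d l.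
Proof.
  intros [<-|[<-|[<-|Hl]]]; [apply local_at_2|apply local_at_p|apply local_at_q|].
  apply (In_nth _ _ 1) in Hl as [j [Hj <-]].
  destruct (classic (In j U)); [apply local_at_Dj_in|apply local_at_Dj_out]; assumption.
Qed.

Lemma selmer_subproduct : selmer_hatphi p q Ds d.
Proof.
  assert (HUr := selmer_indices_range U HU).
  split; [split|split].
  - apply squarefree_prodD; assumption.
  - intros l Hl Hld. destruct (prime_divide_prodD Ds Hpr U HUr l Hl Hld) as [i [Hi ->]].
    right. right. right. apply nth_In, HUr, Hi.
  - exists 0%R, (sqrt (IZR d)). pose proof (prodD_pos Ds Hpr U HUr).
    rewrite mult_IZR, <- Rsqr_pow2, Rsqr_sqrt by (apply IZR_le; fold d; lia). ring.
  - exact local_at_S.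
Qed.

End Subset.
End Theorem1p3.

Theorem theorem1p3 (p q : Z) (Ds : list Z) :
  prime p -> prime q -> Z.odd p = true -> Z.odd q = true -> q - p = 2 ->
  NoDup Ds -> Forall prime Ds ->
  ~ (2 | Dprod Ds) -> ~ (p | Dprod Ds) -> ~ (q | Dprod Ds) ->
  exists T : list nat,
    NoDup T /\ (forall i, In i T -> (i < length Ds)%nat) /\
    Z.of_nat (length T) = rho_plus p q Ds /\
    (* <T mod Q*^2> is contained in the Selmer group *)
    (forall U : list nat, incl U T -> NoDup U ->
       selmer_hatphi p q Ds (prodD Ds U)) /\
    (* and the classes of the elements of T are independent mod squares,
       i.e. <T mod Q*^2> ~ (Z/2Z)^#T *)
    (forall U1 U2 : list nat, incl U1 T -> NoDup U1 -> incl U2 T -> NoDup U2 ->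
       (exists x : Z, prodD Ds U1 * prodD Ds U2 = x * x) ->
       incl U1 U2 /\ incl U2 U1).
Proof.
  intros Hp Hq Hpo Hqo Hqp Hnd Hpr H2D HpD HqD.
  exists (selmer_indices p q Ds). split; [|split; [|split; [|split]]].
  - apply NoDup_filter, NoDup_filter, seq_NoDup.
  - apply (selmer_indices_range p q Ds), incl_refl.
  - rewrite rho_plus_count. reflexivity.
  - intros U HU HnU. apply selmer_subproduct; assumption.
  - intros U1 U2 H1 Hn1 H2 Hn2 [x Hx].
    pose proof (selmer_indices_range p q Ds U1 H1). pose proof (selmer_indices_range p q Ds U2 H2).
    split; apply (incl_of_square_prodD Ds Hpr Hnd); auto.
    + exists x. exact Hx.
    + exists x. rewrite Z.mul_comm. exact Hx.
Qed.
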